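(* Let $d\in\mathbb N$ and $\gamma\in\mathbb R$, and consider the planar system $$\dot Y_1=Y_2-dY_1Y_2,\qquad \dot Y_2=-Y_1-Y_2^2-\gamma Y_2^2 .$$ Then $Y_2$ satisfies the Liénard equation $\ddot Y_2+(2(1-\gamma)+d)\,Y_2\dot Y_2+Y_2+d(1-\gamma)Y_2^3=0$, and the origin is an isochronous center if and only if $(2(1-\gamma)+d)^2=9d(1-\gamma)$, i.e. if and only if $\gamma=1-d$ or $\gamma=1-\frac d4$. In particular, for $\gamma=0$ (the system of characteristics of radially symmetric non-relativistic cold plasma oscillations in $\mathbb R^d$, $\dot x=xY_2$, $\dot Y_1=Y_2-dY_1Y_2$, $\dot Y_2=-Y_1-Y_2^2$), the oscillations are isochronous if and only if $d=1$ or $d=4$. Correspondingly, adding the force term $\mathbf F(\mathbf V,r)=\gamma\,|\mathbf V|^2/r$ with $\gamma\in\{1-d,\,1-\frac d4\}$ to the right-hand side of the momentum equation of the radially symmetric Euler–Poisson system makes the radial oscillations isochronous in dimension $d$.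
   Context: The radially symmetric repulsive Euler–Poisson system with constant background $c=1$, $\mathbf v_t+(\mathbf v\cdot\nabla)\mathbf v=-\nabla\Psi$, $\rho_t+\mathrm{div}(\rho\mathbf v)=0$, $\Delta\Psi=1-\rho$, with $\mathbf v=F(t,r)\mathbf r$, $\nabla\Psi=G(t,r)\mathbf r$, $r=|\mathbf r|$, reduces to $G_t+FrG_r=F-dFG$, $F_t+FrF_r=-F^2-G$; here $Y_1=G$, $Y_2=F$ along characteristics $\dot r=rF$. Adding a force $\mathbf F(\mathbf V,r)$ to the momentum equation adds $-L$ with $L=\frac1r\mathbf F$ to the equation for $\dot Y_2$ (sign conventions as in the system displayed in the claim). An isochronous center is a center of a planar ODE at which all nearby periodic orbits have the same period. *)

From Stdlib Require Import Reals.
From Coquelicot Require Import Coquelicot.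
Open Scope R_scope.

Definition is_solution (f g : R -> R -> R) (Y1 Y2 : R -> R) : Prop :=
  forall t : R, is_derive Y1 t (f (Y1 t) (Y2 t)) /\ is_derive Y2 t (g (Y1 t) (Y2 t)).

Definition has_min_period (Y1 Y2 : R -> R) (T : R) : Prop :=
  0 < T /\
  (forall t : R, Y1 (t + T) = Y1 t /\ Y2 (t + T) = Y2 t) /\
  (forall s : R, 0 < s < T -> exists t : R, Y1 (t + s) <> Y1 t \/ Y2 (t + s) <> Y2 t).

Definition is_center (f g : R -> R -> R) : Prop :=
  f 0 0 = 0 /\ g 0 0 = 0 /\
  exists delta : R, 0 < delta /\
    forall p1 p2 : R, 0 < p1 ^ 2 + p2 ^ 2 < delta ^ 2 ->
      exists (Y1 Y2 : R -> R) (T : R),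
        is_solution f g Y1 Y2 /\ Y1 0 = p1 /\ Y2 0 = p2 /\ has_min_period Y1 Y2 T.

Definition is_isochronous_center (f g : R -> R -> R) : Prop :=
  f 0 0 = 0 /\ g 0 0 = 0 /\
  exists delta : R, 0 < delta /\
  exists T : R,
    forall p1 p2 : R, 0 < p1 ^ 2 + p2 ^ 2 < delta ^ 2 ->
      exists Y1 Y2 : R -> R,
        is_solution f g Y1 Y2 /\ Y1 0 = p1 /\ Y2 0 = p2 /\ has_min_period Y1 Y2 T.

Definition EP1 (d : nat) (y1 y2 : R) : R := y2 - INR d * y1 * y2.
Definition EP2 (gamma : R) (y1 y2 : R) : R := - y1 - y2 ^ 2 + gamma * y2 ^ 2.

(* Differentiating the second equation once gives the Lienard equation for Y2.

   Necessity: choose kap <> 0 and eps with kap (2 (1 - gamma) + d) = 3 eps and put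
   u = kap Y2, v = kap Y1 + (kap (1 - gamma) - eps) Y2^2.  The choice of eps removes the
   cubic terms from the angular velocity of (u, v), which becomes
   1 + D Y2^4 / (u^2 + v^2) with D = kap^2 d (1 - gamma) - eps^2.  Along a periodic orbit
   of period T the angle turns by a multiple of pi, so T + D J is in pi Z, where J is the
   integral of Y2^4 / (u^2 + v^2) over a period.  J is positive and, by a Gronwall bound
   on the energy, tends to 0 with the orbit; hence a period common to all small orbits
   forces D = 0.  Unless (2 (1 - gamma) + d)^2 = 9 d (1 - gamma), kap and eps can be
   chosen with D <> 0.

   Sufficiency: under the condition the system is solved by explicit rational functions
   of a harmonic oscillation, so every small orbit has minimal period 2 pi. *)

From Stdlib Require Import Reals Lra Lia Psatz.
From Coquelicot Require Import Coquelicot.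
Open Scope R_scope.

Lemma EP2E (gamma y1 y2 : R) : EP2 gamma y1 y2 = - y1 - (1 - gamma) * y2 ^ 2.
Proof. unfold EP2; ring. Qed.

(* [auto_derive] leaves derivatives of the unknowns in eta-expanded form. *)
Lemma Derive_eta_unique (f : R -> R) (x l : R) :
  is_derive f x l -> Derive (fun y => f y) x = l.
Proof. apply is_derive_unique. Qed.

Lemma lienard_equation (d : nat) (gamma a b : R) (Y1 Y2 : R -> R) :
  (forall t, a < t < b ->
     is_derive Y1 t (EP1 d (Y1 t) (Y2 t)) /\ is_derive Y2 t (EP2 gamma (Y1 t) (Y2 t))) ->
  forall t, a < t < b ->
    ex_derive (Derive Y2) t /\
    Derive (Derive Y2) t + (2 * (1 - gamma) + INR d) * Y2 t * Derive Y2 t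
      + Y2 t + INR d * (1 - gamma) * Y2 t ^ 3 = 0.
Proof.
  intros Hsol t Ht.
  destruct (Hsol t Ht) as [H1 H2].
  assert (DY2_loc : locally t (fun s => EP2 gamma (Y1 s) (Y2 s) = Derive Y2 s)).
  { apply (filter_imp (fun s => a < s < b)).
    - intros s Hs. symmetry. apply is_derive_unique, (Hsol s Hs).
    - exact (open_and _ _ (open_gt a) (open_lt b) t Ht). }
  assert (DDY2 : is_derive (Derive Y2) t
      (- EP1 d (Y1 t) (Y2 t) - 2 * (1 - gamma) * Y2 t * EP2 gamma (Y1 t) (Y2 t))).
  { apply (is_derive_ext_loc _ _ _ _ DY2_loc).
    unfold EP2 at 1; auto_derive.
    - repeat split; eexists; eassumption.
    - rewrite (Derive_eta_unique _ _ _ H1), (Derive_eta_unique _ _ _ H2); ring. }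
  split; [eexists; exact DDY2 |].
  rewrite (is_derive_unique _ _ _ DDY2), (is_derive_unique _ _ _ H2).
  unfold EP1; rewrite EP2E; ring.
Qed.

Lemma is_derive_nonpos_le (f df : R -> R) (a b : R) : a <= b ->
  (forall x, a <= x <= b -> is_derive f x (df x)) ->
  (forall x, a <= x <= b -> df x <= 0) -> f b <= f a.
Proof.
  intros Hab Hd Hneg.
  destruct (MVT_gen f a b df) as [c [Hc Heq]].
  - rewrite Rmin_left, Rmax_right by lra. intros x Hx. apply Hd. lra.
  - rewrite Rmin_left, Rmax_right by lra. intros x Hx.
    apply continuity_pt_filterlim, (ex_derive_continuous (V := R_NormedModule)).
    eexists. apply Hd, Hx.
  - rewrite Rmin_left, Rmax_right in Hc by lra.
    assert (df c * (b - a) <= 0) by (apply Rmult_le_0_r; [apply Hneg |]; lra).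
    lra.
Qed.

Lemma is_derive_0_eq (f : R -> R) (a b : R) : a <= b ->
  (forall x, a <= x <= b -> is_derive f x 0) -> f b = f a.
Proof.
  intros Hab Hd.
  assert (f b <= f a) by (apply (is_derive_nonpos_le f (fun _ => 0)); auto; intros; lra).
  assert (- f b <= - f a).
  { apply (is_derive_nonpos_le (fun x => - f x) (fun _ => - 0)); auto; [| intros; lra].
    intros x Hx. apply (is_derive_opp f x 0), Hd, Hx. }
  lra.
Qed.

Lemma gronwall_exp (f df : R -> R) (K : R) :
  (forall t, is_derive f t (df t)) -> (forall t, Rabs (df t) <= K * f t) ->
  forall s t, s <= t -> f t <= f s * exp (K * (t - s)) /\ f s <= f t * exp (K * (t - s)).
Proof.
  intros Hd Hb s t Hst.
  assert (Eexp : forall u v, exp (K * (u - v)) = exp (K * u) * exp (- (K * v))).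
  { intros u v. rewrite <- exp_plus. f_equal. ring. }
  assert (Einv : forall u, exp (K * u) * exp (- (K * u)) = 1).
  { intros u. rewrite <- exp_plus, Rplus_opp_r. apply exp_0. }
  assert (Hdecr : f t * exp (- (K * t)) <= f s * exp (- (K * s))).
  { apply (is_derive_nonpos_le (fun x => f x * exp (- (K * x)))
             (fun x => (df x - K * f x) * exp (- (K * x))) s t); auto.
    - intros x _. auto_derive; [exists (df x); apply Hd |].
      rewrite (Derive_eta_unique _ _ _ (Hd x)). ring.
    - intros x _. pose proof (Rle_abs (df x)). pose proof (Hb x).
      pose proof (exp_pos (- (K * x))). nra. }
  assert (Hincr : - (f t * exp (K * t)) <= - (f s * exp (K * s))).
  { apply (is_derive_nonpos_le (fun x => - (f x * exp (K * x)))
             (fun x => - ((df x + K * f x) * exp (K * x))) s t); auto.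
    - intros x _. auto_derive; [exists (df x); apply Hd |].
      rewrite (Derive_eta_unique _ _ _ (Hd x)). ring.
    - intros x _. pose proof (Rle_abs (- df x)). rewrite Rabs_Ropp in *.
      pose proof (Hb x). pose proof (exp_pos (K * x)). nra. }
  rewrite Eexp. pose proof (exp_pos (K * t)). pose proof (exp_pos (- (K * s))).
  split.
  - apply Rmult_le_compat_r with (r := exp (K * t)) in Hdecr; [| lra].
    replace (f t) with (f t * exp (- (K * t)) * exp (K * t))
      by (rewrite Rmult_assoc, (Rmult_comm (exp _)), Einv; ring).
    lra.
  - apply Rmult_le_compat_r with (r := exp (- (K * s))) in Hincr; [| lra].
    replace (f s) with (f s * exp (K * s) * exp (- (K * s))) by (rewrite Rmult_assoc, Einv; ring).
    lra.
Qed.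

Lemma RInt_gt_0_left (f : R -> R) (a b : R) : a < b ->
  (forall x, continuous f x) -> (forall x, 0 <= f x) -> 0 < f a -> 0 < RInt f a b.
Proof.
  intros Hab Hc Hnn Ha.
  assert (Hex : forall x y, ex_RInt f x y).
  { intros. apply (ex_RInt_continuous (V := R_CompleteNormedModule)). auto. }
  destruct (Hc a (ball (f a) (mkposreal _ (Rdiv_lt_0_compat _ 2 Ha Rlt_0_2))))
    as [eta Heta]; [apply locally_ball |].
  set (c := Rmin (a + eta / 2) b).
  assert (Hc1 : a < c) by (unfold c; pose proof (cond_pos eta); apply Rmin_glb_lt; lra).
  assert (Hc2 : c <= b) by apply Rmin_r.
  rewrite <- (RInt_Chasles f a c b) by auto.
  assert (0 < RInt f a c).
  { apply RInt_gt_0; auto. intros x Hx.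
    assert (Hb : ball a eta x).
    { apply Rabs_lt_between'. unfold c in Hx. pose proof (Rmin_l (a + eta / 2) b).
      pose proof (cond_pos eta). lra. }
    apply Heta, Rabs_lt_between' in Hb. simpl in Hb. lra. }
  assert (0 <= RInt f c b) by (apply RInt_ge_0; auto).
  unfold plus; simpl; lra.
Qed.

(* [th] follows the polar angle of [(u, v)]: the rotation of [(u 0, v 0)] by
   [th - th 0] stays parallel to [(u, v)], which the conserved quantity [F]
   expresses. *)
Lemma polar_angle_return (u v th du dv dth : R -> R) (T : R) : 0 <= T ->
  (forall t, is_derive u t (du t)) -> (forall t, is_derive v t (dv t)) ->
  (forall t, is_derive th t (dth t)) ->
  (forall t, 0 < u t ^ 2 + v t ^ 2) ->
  (forall t, dth t * (u t ^ 2 + v t ^ 2) = u t * dv t - v t * du t) ->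
  u T = u 0 -> v T = v 0 -> exists n : Z, th T - th 0 = IZR n * PI.
Proof.
  intros HT Hu Hv Hth Hr Hdth HuT HvT.
  set (F := fun s =>
    ((u 0 * cos (th s - th 0) - v 0 * sin (th s - th 0)) * v s
     - (u 0 * sin (th s - th 0) + v 0 * cos (th s - th 0)) * u s) ^ 2 / (u s ^ 2 + v s ^ 2)).
  assert (HF : F T = F 0).
  { apply is_derive_0_eq; [exact HT |]. intros t _.
    pose proof (Hr t). unfold F. auto_derive.
    - repeat split; try (eexists; eauto). lra.
    - rewrite (Derive_eta_unique _ _ _ (Hu t)), (Derive_eta_unique _ _ _ (Hv t)),
        (Derive_eta_unique _ _ _ (Hth t)).
      replace (dth t) with ((u t * dv t - v t * du t) / (u t ^ 2 + v t ^ 2))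
        by (rewrite <- Hdth; field; lra).
      field. lra. }
  assert (Hr0 := Hr 0).
  unfold F in HF. rewrite HuT, HvT, Rminus_diag, cos_0, sin_0 in HF.
  replace ((u 0 * cos (th T - th 0) - v 0 * sin (th T - th 0)) * v 0
           - (u 0 * sin (th T - th 0) + v 0 * cos (th T - th 0)) * u 0)
    with (- (sin (th T - th 0) * (u 0 ^ 2 + v 0 ^ 2))) in HF by ring.
  assert (Hsq : Rsqr (sin (th T - th 0) * (u 0 ^ 2 + v 0 ^ 2)) = 0).
  { apply (Rmult_eq_compat_r (u 0 ^ 2 + v 0 ^ 2)) in HF.
    unfold Rdiv in HF. rewrite !Rmult_assoc, Rinv_l in HF by lra. unfold Rsqr. lra. }
  apply Rsqr_0_uniq, Rmult_integral in Hsq. destruct Hsq as [Hsin | Hzero]; [| lra].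
  apply sin_eq_0_0, Hsin.
Qed.

Lemma energy_growth_bound (dd c y1 y2 : R) : 0 <= dd ->
  Rabs (2 * y1 * (y2 - dd * y1 * y2) + 2 * y2 * (- y1 - c * y2 ^ 2))
  <= (dd + Rabs c) * (y1 ^ 2 + y2 ^ 2) * (1 + (y1 ^ 2 + y2 ^ 2)).
Proof.
  intros Hd.
  replace (2 * y1 * (y2 - dd * y1 * y2) + 2 * y2 * (- y1 - c * y2 ^ 2))
    with (- (2 * y2) * (dd * y1 ^ 2 + c * y2 ^ 2)) by ring.
  rewrite Rabs_mult, Rabs_Ropp.
  assert (Hq : Rabs (dd * y1 ^ 2 + c * y2 ^ 2) <= (dd + Rabs c) * (y1 ^ 2 + y2 ^ 2)).
  { eapply Rle_trans; [apply Rabs_triang |].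
    rewrite !Rabs_mult, (Rabs_pos_eq dd Hd), !(Rabs_pos_eq (_ ^ 2)) by apply pow2_ge_0.
    pose proof (Rabs_pos c). pose proof (pow2_ge_0 y1). nra. }
  assert (Hl : Rabs (2 * y2) <= 1 + (y1 ^ 2 + y2 ^ 2)).
  { apply Rabs_le. pose proof (pow2_ge_0 (y2 + 1)). pose proof (pow2_ge_0 (y2 - 1)).
    pose proof (pow2_ge_0 y1). split; nra. }
  rewrite Rmult_comm.
  apply Rmult_le_compat; auto using Rabs_pos.
Qed.

Section Energy.

Variables (d : nat) (gamma : R) (Y1 Y2 : R -> R).
Hypothesis Hsol : is_solution (EP1 d) (EP2 gamma) Y1 Y2.

Definition energy (t : R) : R := Y1 t ^ 2 + Y2 t ^ 2.
Definition energy_rate (t : R) : R :=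
  2 * Y1 t * EP1 d (Y1 t) (Y2 t) + 2 * Y2 t * EP2 gamma (Y1 t) (Y2 t).
Definition growth_const : R := INR d + Rabs (1 - gamma).

Lemma energy_ge0 t : 0 <= energy t.
Proof. unfold energy. nra. Qed.

Lemma growth_const_ge0 : 0 <= growth_const.
Proof. unfold growth_const. pose proof (pos_INR d). pose proof (Rabs_pos (1 - gamma)). lra. Qed.

(* The energy rate is cubic, so Gronwall is applied to energy / (1 + energy),
   whose logarithmic derivative is bounded by growth_const. *)
Lemma is_derive_bounded_energy t :
  is_derive (fun s => energy s / (1 + energy s)) t (energy_rate t / (1 + energy t) ^ 2).
Proof.
  destruct (Hsol t) as [H1 H2]. pose proof (energy_ge0 t).
  unfold energy in *. auto_derive.
  - repeat split; try (eexists; eassumption). lra.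
  - rewrite (Derive_eta_unique _ _ _ H1), (Derive_eta_unique _ _ _ H2).
    unfold energy_rate. field. lra.
Qed.

Lemma bounded_energy_rate_le t :
  Rabs (energy_rate t / (1 + energy t) ^ 2) <= growth_const * (energy t / (1 + energy t)).
Proof.
  pose proof (energy_ge0 t).
  assert (Hb := energy_growth_bound (INR d) (1 - gamma) (Y1 t) (Y2 t) (pos_INR d)).
  rewrite <- EP2E in Hb. fold (EP1 d (Y1 t) (Y2 t)) (energy t) (energy_rate t) in Hb.
  unfold Rdiv at 1. rewrite Rabs_mult, (Rabs_pos_eq (/ _)).
  2: { apply Rlt_le, Rinv_0_lt_compat, pow2_gt_0. lra. }
  apply (Rmult_le_reg_r ((1 + energy t) ^ 2)); [apply pow2_gt_0; lra |].
  unfold growth_const. field_simplify; lra.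
Qed.

Let bounded_energy_gronwall :=
  gronwall_exp (fun s => energy s / (1 + energy s)) _ growth_const
    is_derive_bounded_energy bounded_energy_rate_le.

Lemma energy_pos : 0 < energy 0 -> forall t, 0 < energy t.
Proof.
  intros H0 t.
  assert (Hh0 : 0 < energy 0 / (1 + energy 0)) by (apply Rdiv_lt_0_compat; lra).
  assert (Hht : 0 < energy t / (1 + energy t)).
  { destruct (Rle_or_lt 0 t) as [Ht | Ht].
    - destruct (bounded_energy_gronwall 0 t Ht) as [_ H].
      pose proof (exp_pos (growth_const * (t - 0))). nra.
    - destruct (bounded_energy_gronwall t 0 (Rlt_le _ _ Ht)) as [H _].
      pose proof (exp_pos (growth_const * (0 - t))). nra. }
  destruct (energy_ge0 t) as [Hpos | Hzero]; [exact Hpos |].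
  rewrite <- Hzero in Hht. unfold Rdiv in Hht. lra.
Qed.

Lemma energy_small t : 0 <= t -> energy 0 * exp (growth_const * t) <= 1 / 2 ->
  energy t <= 2 * energy 0 * exp (growth_const * t).
Proof.
  intros Ht Hsmall.
  destruct (bounded_energy_gronwall 0 t Ht) as [H _]. rewrite Rminus_0_r in H.
  pose proof (energy_ge0 0). pose proof (energy_ge0 t). pose proof (exp_pos (growth_const * t)).
  assert (energy 0 / (1 + energy 0) <= energy 0).
  { apply (Rmult_le_reg_r (1 + energy 0)); [lra |]. field_simplify; nra. }
  assert (Hh : energy t / (1 + energy t) <= energy 0 * exp (growth_const * t)) by nra.
  apply (Rmult_le_compat_r (1 + energy t)) in Hh; [| lra].
  field_simplify in Hh; nra.
Qed.

End Energy.

Section Twisted_coordinates.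

Variables (d : nat) (gamma : R) (Y1 Y2 : R -> R) (kap eps : R).
Hypothesis Hsol : is_solution (EP1 d) (EP2 gamma) Y1 Y2.
Hypothesis Hkap : kap <> 0.
Hypothesis Heps : kap * (2 * (1 - gamma) + INR d) = 3 * eps.
Hypothesis Henergy : 0 < energy Y1 Y2 0.

Definition twist_u (t : R) : R := kap * Y2 t.
Definition twist_v (t : R) : R := kap * Y1 t + (kap * (1 - gamma) - eps) * Y2 t ^ 2.
Definition twist_r (t : R) : R := twist_u t ^ 2 + twist_v t ^ 2.
Definition twist_defect : R := kap ^ 2 * INR d * (1 - gamma) - eps ^ 2.
Definition defect_density (t : R) : R := Y2 t ^ 4 / twist_r t.
Definition defect (t : R) : R := RInt defect_density 0 t.

Lemma twist_r_pos t : 0 < twist_r t.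
Proof.
  pose proof (energy_pos d gamma Y1 Y2 Hsol Henergy t) as H. unfold energy in H.
  assert (Hk2 : 0 < kap ^ 2) by (apply pow2_gt_0, Hkap).
  unfold twist_r, twist_u, twist_v.
  destruct (Req_dec (Y2 t) 0) as [H2 | H2].
  - rewrite H2 in *. assert (0 < Y1 t ^ 2) by lra.
    replace (0 ^ 2) with 0 by ring. nra.
  - assert (0 < Y2 t ^ 2) by (apply pow2_gt_0, H2).
    pose proof (pow2_ge_0 (kap * Y1 t + (kap * (1 - gamma) - eps) * Y2 t ^ 2)). nra.
Qed.

Lemma defect_density_ge0 t : 0 <= defect_density t.
Proof.
  pose proof (twist_r_pos t). unfold defect_density.
  apply Rdiv_le_0_compat; [nra | lra].
Qed.

Lemma defect_density_le t : defect_density t <= Y2 t ^ 2 / kap ^ 2.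
Proof.
  pose proof (twist_r_pos t).
  assert (Hk2 : 0 < kap ^ 2) by (apply pow2_gt_0, Hkap).
  unfold defect_density.
  apply (Rmult_le_reg_r (twist_r t * kap ^ 2)); [nra |].
  replace (Y2 t ^ 4 / twist_r t * (twist_r t * kap ^ 2)) with (Y2 t ^ 4 * kap ^ 2) by (field; lra).
  replace (Y2 t ^ 2 / kap ^ 2 * (twist_r t * kap ^ 2)) with (Y2 t ^ 2 * twist_r t) by (field; lra).
  unfold twist_r, twist_u.
  pose proof (pow2_ge_0 (Y2 t)). pose proof (pow2_ge_0 (twist_v t)). nra.
Qed.

Lemma defect_density_continuous t : continuous defect_density t.
Proof.
  apply (ex_derive_continuous (V := R_NormedModule)).
  destruct (Hsol t) as [H1 H2]. pose proof (twist_r_pos t).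
  unfold defect_density, twist_r, twist_u, twist_v in *. auto_derive.
  repeat split; try (eexists; eassumption). lra.
Qed.

Lemma is_derive_defect t : is_derive defect t (defect_density t).
Proof.
  apply (is_derive_RInt defect_density defect 0); [| apply defect_density_continuous].
  apply filter_forall. intros b. apply (RInt_correct (V := R_CompleteNormedModule)).
  apply (ex_RInt_continuous (V := R_CompleteNormedModule)).
  intros; apply defect_density_continuous.
Qed.

Lemma twisted_angle_rate t : (1 + twist_defect * defect_density t) * twist_r t =
  twist_u t * (kap * EP1 d (Y1 t) (Y2 t)
               + 2 * (kap * (1 - gamma) - eps) * Y2 t * EP2 gamma (Y1 t) (Y2 t))
  - twist_v t * (kap * EP2 gamma (Y1 t) (Y2 t)).
Proof.
  pose proof (twist_r_pos t). unfold defect_density.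
  replace ((1 + twist_defect * (Y2 t ^ 4 / twist_r t)) * twist_r t)
    with (twist_r t + twist_defect * Y2 t ^ 4) by (field; lra).
  assert (Hd : INR d = 3 * eps / kap - 2 * (1 - gamma)).
  { apply (Rmult_eq_reg_l kap); [| exact Hkap]. rewrite <- Heps. field. exact Hkap. }
  unfold twist_r, twist_u, twist_v, twist_defect, EP1. rewrite EP2E, Hd.
  field. exact Hkap.
Qed.

Lemma period_angle_quantized T : 0 < T -> Y1 T = Y1 0 -> Y2 T = Y2 0 ->
  exists n : Z, T + twist_defect * defect T = IZR n * PI.
Proof.
  intros HT H1 H2.
  destruct (polar_angle_return twist_u twist_v (fun t => t + twist_defect * defect t)
    (fun t => kap * EP2 gamma (Y1 t) (Y2 t))
    (fun t => kap * EP1 d (Y1 t) (Y2 t)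
              + 2 * (kap * (1 - gamma) - eps) * Y2 t * EP2 gamma (Y1 t) (Y2 t))
    (fun t => 1 + twist_defect * defect_density t) T) as [n Hn].
  - lra.
  - intros t. destruct (Hsol t) as [_ H]. unfold twist_u. auto_derive; [eexists; eauto |].
    rewrite (Derive_eta_unique _ _ _ H). ring.
  - intros t. destruct (Hsol t) as [Ha Hb]. unfold twist_v.
    auto_derive; [repeat split; eexists; eauto |].
    rewrite (Derive_eta_unique _ _ _ Ha), (Derive_eta_unique _ _ _ Hb). ring.
  - intros t. pose proof (is_derive_defect t). auto_derive; [eexists; eauto |].
    rewrite (Derive_eta_unique _ _ _ H). ring.
  - apply twist_r_pos.
  - apply twisted_angle_rate.
  - unfold twist_u. rewrite H2. reflexivity.
  - unfold twist_v. rewrite H1, H2. reflexivity.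
  - exists n. rewrite <- Hn. unfold defect. rewrite RInt_point. unfold zero; simpl. ring.
Qed.

Lemma defect_pos T : 0 < T -> Y2 0 <> 0 -> 0 < defect T.
Proof.
  intros HT H0.
  apply RInt_gt_0_left; auto using defect_density_continuous, defect_density_ge0.
  pose proof (twist_r_pos 0). unfold defect_density.
  apply Rdiv_lt_0_compat; [| lra].
  replace (Y2 0 ^ 4) with ((Y2 0 ^ 2) ^ 2) by ring.
  apply pow2_gt_0, pow_nonzero, H0.
Qed.

Lemma defect_le T : 0 <= T -> energy Y1 Y2 0 * exp (growth_const d gamma * T) <= 1 / 2 ->
  defect T <= T * (2 * energy Y1 Y2 0 * exp (growth_const d gamma * T) / kap ^ 2).
Proof.
  intros HT Hsmall.
  assert (Hk2 : 0 < kap ^ 2) by (apply pow2_gt_0, Hkap).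
  pose proof (growth_const_ge0 d gamma).
  set (c := 2 * energy Y1 Y2 0 * exp (growth_const d gamma * T) / kap ^ 2).
  replace (T * c) with (RInt (fun _ => c) 0 T)
    by (rewrite RInt_const; unfold scal; simpl; unfold mult; simpl; ring).
  apply RInt_le; [exact HT | | apply ex_RInt_const |].
  - apply (ex_RInt_continuous (V := R_CompleteNormedModule)).
    intros; apply defect_density_continuous.
  - intros x Hx.
    assert (Hexp : exp (growth_const d gamma * x) <= exp (growth_const d gamma * T)).
    { destruct (Req_dec (growth_const d gamma) 0) as [E | E].
      - rewrite E, !Rmult_0_l. lra.
      - apply Rlt_le, exp_increasing. apply Rmult_lt_compat_l; lra. }
    pose proof (energy_ge0 Y1 Y2 0).
    assert (Hx_small : energy Y1 Y2 0 * exp (growth_const d gamma * x) <= 1 / 2).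
    { eapply Rle_trans; [| exact Hsmall]. apply Rmult_le_compat_l; lra. }
    pose proof (energy_small d gamma Y1 Y2 Hsol x (Rlt_le _ _ (proj1 Hx)) Hx_small).
    eapply Rle_trans; [apply defect_density_le |].
    unfold c, Rdiv. apply Rmult_le_compat_r; [apply Rlt_le, Rinv_0_lt_compat, Hk2 |].
    unfold energy in *. pose proof (pow2_ge_0 (Y1 x)). nra.
Qed.

End Twisted_coordinates.

Lemma small_orbits_defect_quantized (d : nat) (gamma kap eps delta T : R) :
  kap <> 0 -> kap * (2 * (1 - gamma) + INR d) = 3 * eps ->
  (forall p1 p2, 0 < p1 ^ 2 + p2 ^ 2 < delta ^ 2 ->
     exists Y1 Y2, is_solution (EP1 d) (EP2 gamma) Y1 Y2 /\ Y1 0 = p1 /\ Y2 0 = p2 /\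
                   has_min_period Y1 Y2 T) ->
  forall r, 0 < r < Rmin (delta ^ 2) (/ (2 * exp (growth_const d gamma * T))) ->
  exists j, 0 < j <= T * (2 * exp (growth_const d gamma * T) / kap ^ 2) * r /\
            exists n : Z, T + twist_defect d gamma kap eps * j = IZR n * PI.
Proof.
  intros Hkap Heps Hiso r [Hr Hrho].
  set (E := exp (growth_const d gamma * T)).
  assert (HE : 0 < E) by apply exp_pos.
  assert (Hr1 : r < delta ^ 2) by (eapply Rlt_le_trans; [exact Hrho | apply Rmin_l]).
  assert (Hr2 : r * E <= 1 / 2).
  { assert (Hr2 : r < / (2 * E)) by (eapply Rlt_le_trans; [exact Hrho | apply Rmin_r]).
    apply (Rmult_lt_compat_r E) in Hr2; [| exact HE].
    replace (/ (2 * E) * E) with (1 / 2) in Hr2 by (field; lra). lra. }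
  destruct (Hiso 0 (sqrt r)) as [Y1 [Y2 [Hsol [H01 [H02 [HT [Hper _]]]]]]].
  { rewrite pow2_sqrt by lra. lra. }
  assert (Henergy : energy Y1 Y2 0 = r) by (unfold energy; rewrite H01, H02, pow2_sqrt; lra).
  destruct (Hper 0) as [HP1 HP2]. rewrite Rplus_0_l in HP1, HP2.
  exists (defect gamma Y1 Y2 kap eps T). split; [split |].
  - apply (defect_pos d gamma Y1 Y2 kap eps Hsol Hkap); [lra | lra |].
    rewrite H02. apply Rgt_not_eq, sqrt_lt_R0, Hr.
  - replace (_ * r) with (T * (2 * energy Y1 Y2 0 * E / kap ^ 2))
      by (rewrite Henergy; field; exact Hkap).
    apply (defect_le d gamma Y1 Y2 kap eps Hsol Hkap); [lra | lra | rewrite Henergy; exact Hr2].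
  - apply (period_angle_quantized d gamma Y1 Y2 kap eps Hsol Hkap Heps); auto. lra.
Qed.

(* Two distinct such [j] small enough differ by an amount that [D] sends to a
   multiple of [pi] of modulus less than [pi]. *)
Lemma vanishing_quantized_eq0 (D T C rho : R) : 0 < rho ->
  (forall r, 0 < r < rho ->
     exists j, 0 < j <= C * r /\ exists n : Z, T + D * j = IZR n * PI) ->
  D = 0.
Proof.
  intros Hrho Hq.
  assert (HPI := PI_RGT_0).
  assert (HC : 0 < C).
  { destruct (Hq (rho / 2)) as [j [Hj _]]; [lra |].
    apply (Rmult_lt_reg_r (rho / 2)); nra. }
  set (A := Rabs D * C).
  assert (HA : 0 <= A) by (unfold A; pose proof (Rabs_pos D); nra).
  set (r1 := Rmin (rho / 2) (PI / (2 * (A + 1)))).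
  assert (Hr1 : 0 < r1) by (apply Rmin_glb_lt; [lra | apply Rdiv_lt_0_compat; lra]).
  destruct (Hq r1) as [j1 [[Hj1 Hj1C] [n1 Hn1]]].
  { split; [exact Hr1 |]. pose proof (Rmin_l (rho / 2) (PI / (2 * (A + 1)))). unfold r1; lra. }
  set (r2 := Rmin (rho / 2) (j1 / (2 * C))).
  assert (Hr2 : 0 < r2) by (apply Rmin_glb_lt; [lra | apply Rdiv_lt_0_compat; lra]).
  destruct (Hq r2) as [j2 [[Hj2 Hj2C] [n2 Hn2]]].
  { split; [exact Hr2 |]. pose proof (Rmin_l (rho / 2) (j1 / (2 * C))). unfold r2; lra. }
  assert (Hj12 : j2 < j1).
  { assert (Hr2C : r2 <= j1 / (2 * C)) by apply Rmin_r.
    apply (Rmult_le_compat_l C) in Hr2C; [| lra].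
    replace (C * (j1 / (2 * C))) with (j1 / 2) in Hr2C by (field; lra). lra. }
  assert (Hsmall : Rabs (D * (j1 - j2)) < PI).
  { assert (Hr1A : r1 <= PI / (2 * (A + 1))) by apply Rmin_r.
    assert (A * r1 <= PI / 2).
    { apply (Rmult_le_compat_l A) in Hr1A; [| exact HA].
      eapply Rle_trans; [exact Hr1A |].
      apply (Rmult_le_reg_r (2 * (A + 1))); [lra |].
      replace (A * (PI / (2 * (A + 1))) * (2 * (A + 1))) with (A * PI) by (field; lra). nra. }
    rewrite Rabs_mult, (Rabs_pos_eq (j1 - j2)) by lra.
    pose proof (Rabs_pos D). unfold A in *. nra. }
  replace (D * (j1 - j2)) with (IZR (n1 - n2) * PI) in Hsmall by (rewrite minus_IZR; lra).
  rewrite Rabs_mult, (Rabs_pos_eq PI), <- abs_IZR in Hsmall by lra.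
  assert (Hn : (Z.abs (n1 - n2) < 1)%Z).
  { apply lt_IZR. apply (Rmult_lt_reg_r PI); lra. }
  assert (Hn12 : n1 = n2) by lia. subst n2.
  assert (Hzero : D * (j1 - j2) = 0) by lra.
  apply Rmult_integral in Hzero. destruct Hzero; [assumption | lra].
Qed.

Lemma twist_params_exist (d : nat) (gamma : R) :
  (2 * (1 - gamma) + INR d) ^ 2 <> 9 * INR d * (1 - gamma) ->
  exists kap eps, kap <> 0 /\ kap * (2 * (1 - gamma) + INR d) = 3 * eps /\
                  twist_defect d gamma kap eps <> 0.
Proof.
  intros Hne. unfold twist_defect.
  destruct (Req_dec (2 * (1 - gamma) + INR d) 0) as [Ha | Ha].
  - exists 1, 0. rewrite Ha in *. repeat split; [lra | ring | lra].
  - exists (3 / (2 * (1 - gamma) + INR d)), 1. repeat split.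
    + unfold Rdiv. apply Rmult_integral_contrapositive_currified; [lra |].
      apply Rinv_neq_0_compat, Ha.
    + field. exact Ha.
    + intros H. apply Hne.
      apply (Rmult_eq_compat_r ((2 * (1 - gamma) + INR d) ^ 2)) in H.
      field_simplify in H; [lra | exact Ha].
Qed.

Lemma isochronous_condition_necessary (d : nat) (gamma : R) :
  is_isochronous_center (EP1 d) (EP2 gamma) ->
  (2 * (1 - gamma) + INR d) ^ 2 = 9 * INR d * (1 - gamma).
Proof.
  intros [_ [_ [delta [Hdelta [T Hiso]]]]].
  destruct (Req_dec ((2 * (1 - gamma) + INR d) ^ 2) (9 * INR d * (1 - gamma))) as [E | Hne];
    [exact E | exfalso].
  destruct (twist_params_exist d gamma Hne) as [kap [eps [Hkap [Heps HD]]]].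
  apply HD. eapply vanishing_quantized_eq0;
    [| exact (small_orbits_defect_quantized d gamma kap eps delta T Hkap Heps Hiso)].
  apply Rmin_glb_lt; [apply pow2_gt_0; lra | apply Rinv_0_lt_compat].
  pose proof (exp_pos (growth_const d gamma * T)). lra.
Qed.

Definition osc_c (B C t : R) : R := B * cos t + C * sin t.
Definition osc_s (B C t : R) : R := C * cos t - B * sin t.

Lemma is_derive_osc_c (B C t : R) : is_derive (osc_c B C) t (osc_s B C t).
Proof. unfold osc_c, osc_s. auto_derive; [exact I | ring]. Qed.

Lemma is_derive_osc_s (B C t : R) : is_derive (osc_s B C) t (- osc_c B C t).
Proof. unfold osc_c, osc_s. auto_derive; [exact I | ring]. Qed.

Lemma osc_c_sqr_le (B C t : R) : osc_c B C t ^ 2 <= B ^ 2 + C ^ 2.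
Proof.
  pose proof (sin2_cos2 t) as Hpy. unfold Rsqr in Hpy.
  pose proof (pow2_ge_0 (osc_s B C t)).
  replace (B ^ 2 + C ^ 2) with (osc_c B C t ^ 2 + osc_s B C t ^ 2).
  - lra.
  - unfold osc_c, osc_s.
    replace (B ^ 2 + C ^ 2) with ((B ^ 2 + C ^ 2) * (sin t * sin t + cos t * cos t))
      by (rewrite Hpy; ring).
    ring.
Qed.

Lemma osc_return_2PI (B C s : R) : 0 < B ^ 2 + C ^ 2 -> 0 < s < 2 * PI ->
  osc_c B C s = B -> osc_s B C s = C -> False.
Proof.
  intros HBC Hs Hc Hs'.
  assert (Hsq : (B ^ 2 + C ^ 2) * ((cos s - 1) ^ 2 + sin s ^ 2) = 0).
  { replace ((B ^ 2 + C ^ 2) * ((cos s - 1) ^ 2 + sin s ^ 2))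
      with ((osc_c B C s - B) ^ 2 + (osc_s B C s - C) ^ 2) by (unfold osc_c, osc_s; ring).
    rewrite Hc, Hs'. ring. }
  apply Rmult_integral in Hsq. destruct Hsq as [| Hsq]; [lra |].
  pose proof (pow2_ge_0 (cos s - 1)). pose proof (pow2_ge_0 (sin s)).
  assert (Hsin : sin s = 0) by nra.
  assert (Hcos : cos s = 1) by nra.
  destruct (sin_eq_O_2PI_0 s) as [E | [E | E]]; try lra.
  rewrite E, cos_PI in Hcos. lra.
Qed.

Lemma has_min_period_osc (B C : R) (F1 F2 : R -> R -> R) : 0 < B ^ 2 + C ^ 2 ->
  (forall s, F1 (osc_c B C s) (osc_s B C s) = F1 B C ->
             F2 (osc_c B C s) (osc_s B C s) = F2 B C -> osc_c B C s = B /\ osc_s B C s = C) ->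
  has_min_period (fun t => F1 (osc_c B C t) (osc_s B C t))
                 (fun t => F2 (osc_c B C t) (osc_s B C t)) (2 * PI).
Proof.
  intros HBC Hinj.
  assert (HPI := PI_RGT_0).
  assert (Hc0 : osc_c B C 0 = B) by (unfold osc_c; rewrite cos_0, sin_0; ring).
  assert (Hs0 : osc_s B C 0 = C) by (unfold osc_s; rewrite cos_0, sin_0; ring).
  assert (Hper : forall t, osc_c B C (t + 2 * PI) = osc_c B C t /\
                           osc_s B C (t + 2 * PI) = osc_s B C t).
  { intros t. unfold osc_c, osc_s. rewrite cos_plus, sin_plus, cos_2PI, sin_2PI.
    split; ring. }
  split; [lra | split].
  - intros t. destruct (Hper t) as [-> ->]. split; reflexivity.
  - intros s Hs. exists 0. rewrite Rplus_0_l, Hc0, Hs0.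
    destruct (Req_dec (F1 (osc_c B C s) (osc_s B C s)) (F1 B C)) as [E1 | E1]; [| left; exact E1].
    destruct (Req_dec (F2 (osc_c B C s) (osc_s B C s)) (F2 B C)) as [E2 | E2]; [| right; exact E2].
    destruct (Hinj s E1 E2) as [Ec Es].
    exfalso. exact (osc_return_2PI B C s HBC Hs Ec Es).
Qed.

Lemma isochronous_center_linear (gamma : R) : gamma = 1 ->
  is_isochronous_center (EP1 0) (EP2 gamma).
Proof.
  intros ->.
  split; [unfold EP1; ring |]. split; [unfold EP2; ring |].
  exists 1. split; [lra |]. exists (2 * PI).
  intros p1 p2 Hp.
  exists (osc_c p1 p2), (osc_s p1 p2). split; [intros t; split | split; [| split]].
  - unfold EP1. simpl INR. replace (osc_s p1 p2 t - 0 * _ * _) with (osc_s p1 p2 t) by ring.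
    apply is_derive_osc_c.
  - unfold EP2. replace (- _ - _ + 1 * _) with (- osc_c p1 p2 t) by ring.
    apply is_derive_osc_s.
  - unfold osc_c. rewrite cos_0, sin_0. ring.
  - unfold osc_s. rewrite cos_0, sin_0. ring.
  - apply (has_min_period_osc p1 p2 (fun a _ => a) (fun _ b => b)); [lra |].
    intros s E1 E2. split; assumption.
Qed.

Definition iso_Y1 (k lam a b : R) : R := k * (a / (1 + a)) + lam * (b / (1 + a)) ^ 2.
Definition iso_Y2 (k a b : R) : R := k * (b / (1 + a)).

Lemma is_solution_iso (d : nat) (gamma k B C : R) : k <> 0 ->
  (1 - gamma = / k \/ 1 - gamma = / (2 * k)) -> INR d = 3 / k - 2 * (1 - gamma) ->
  (forall t, 1 + osc_c B C t <> 0) ->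
  is_solution (EP1 d) (EP2 gamma)
    (fun t => iso_Y1 k (k - (1 - gamma) * k ^ 2) (osc_c B C t) (osc_s B C t))
    (fun t => iso_Y2 k (osc_c B C t) (osc_s B C t)).
Proof.
  intros Hk Hc Hd Hpos t. specialize (Hpos t).
  pose proof (is_derive_osc_c B C t). pose proof (is_derive_osc_s B C t).
  unfold iso_Y1, iso_Y2, EP1. rewrite EP2E, Hd.
  split; (auto_derive; [repeat split; auto; eexists; eauto |]);
    rewrite (Derive_eta_unique _ _ _ H), (Derive_eta_unique _ _ _ H0);
    destruct Hc as [-> | ->]; field; auto.
Qed.

Lemma iso_map_injective (k lam a b a' b' : R) : k <> 0 -> 1 + a <> 0 -> 1 + a' <> 0 ->
  iso_Y1 k lam a b = iso_Y1 k lam a' b' -> iso_Y2 k a b = iso_Y2 k a' b' -> a = a' /\ b = b'.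
Proof.
  unfold iso_Y1, iso_Y2. intros Hk Ha Ha' E1 E2.
  assert (Eb : b / (1 + a) = b' / (1 + a')) by (apply (Rmult_eq_reg_l k); auto).
  rewrite Eb in E1.
  assert (Ea : a / (1 + a) = a' / (1 + a')) by (apply (Rmult_eq_reg_l k); auto; lra).
  assert (Ea2 : a = a').
  { assert (Einv : / (1 + a) = / (1 + a')).
    { replace (/ (1 + a)) with (1 - a / (1 + a)) by (field; exact Ha).
      rewrite Ea. field. exact Ha'. }
    apply Rinv_eq_reg in Einv. lra. }
  subst a'. split; [reflexivity |].
  apply (Rmult_eq_reg_r (/ (1 + a))); [exact Eb | apply Rinv_neq_0_compat, Ha].
Qed.

Lemma iso_initial_data (k lam p1 p2 : R) : k <> 0 ->
  (p2 / k) ^ 2 < 1 - 2 * ((p1 - lam * (p2 / k) ^ 2) / k) ->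
  exists B C, B ^ 2 + C ^ 2 < 1 /\ iso_Y1 k lam B C = p1 /\ iso_Y2 k B C = p2.
Proof.
  intros Hk Hsmall.
  set (g := p2 / k) in *. set (beta := (p1 - lam * g ^ 2) / k) in *.
  assert (Hb : 0 < 1 - beta) by (pose proof (pow2_ge_0 g); lra).
  exists (beta / (1 - beta)), (g / (1 - beta)).
  assert (Ex : forall x, x / (1 - beta) / (1 + beta / (1 - beta)) = x) by (intros; field; lra).
  unfold iso_Y1, iso_Y2. rewrite !Ex. split; [| split].
  - apply (Rmult_lt_reg_r ((1 - beta) ^ 2)); [nra |].
    replace (((beta / (1 - beta)) ^ 2 + (g / (1 - beta)) ^ 2) * (1 - beta) ^ 2)
      with (beta ^ 2 + g ^ 2) by (field; lra).
    nra.
  - unfold beta. field. exact Hk.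
  - unfold g. field. exact Hk.
Qed.

Lemma iso_small_data (k lam delta p1 p2 : R) : 0 < k -> 0 < delta <= 1 ->
  4 * (1 + Rabs lam / k ^ 2) * delta <= k -> p1 ^ 2 + p2 ^ 2 < delta ^ 2 ->
  (p2 / k) ^ 2 < 1 - 2 * ((p1 - lam * (p2 / k) ^ 2) / k).
Proof.
  intros Hk Hdelta Hdk Hp.
  assert (Hk2 : 0 < k ^ 2) by (apply pow2_gt_0; lra).
  set (L := Rabs lam / k ^ 2) in *.
  assert (HL : 0 <= L) by (apply Rdiv_le_0_compat; [apply Rabs_pos | exact Hk2]).
  pose proof (pow2_ge_0 p1). pose proof (pow2_ge_0 p2).
  assert (Hp1 : Rabs p1 < delta) by (apply Rabs_def1; nra).
  assert (Hp2 : p2 ^ 2 <= delta) by nra.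
  assert (Hlam : Rabs (lam * (p2 / k) ^ 2) <= L * delta).
  { rewrite Rabs_mult, (Rabs_pos_eq (_ ^ 2)) by apply pow2_ge_0.
    replace ((p2 / k) ^ 2) with (p2 ^ 2 / k ^ 2) by (field; lra).
    replace (Rabs lam * (p2 ^ 2 / k ^ 2)) with (L * p2 ^ 2) by (unfold L; field; lra).
    apply Rmult_le_compat_l; assumption. }
  assert (Hbeta : (p1 - lam * (p2 / k) ^ 2) / k < 1 / 4).
  { apply (Rmult_lt_reg_r k); [exact Hk |].
    replace ((p1 - lam * (p2 / k) ^ 2) / k * k) with (p1 - lam * (p2 / k) ^ 2) by (field; lra).
    pose proof (Rle_abs p1). pose proof (Rle_abs (- (lam * (p2 / k) ^ 2))).
    rewrite Rabs_Ropp in *. lra. }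
  assert (Hg : (p2 / k) ^ 2 < 1 / 16).
  { replace ((p2 / k) ^ 2) with (p2 ^ 2 / k ^ 2) by (field; lra).
    apply (Rmult_lt_reg_r (k ^ 2)); [exact Hk2 |].
    replace (p2 ^ 2 / k ^ 2 * k ^ 2) with (p2 ^ 2) by (field; lra).
    assert (4 * delta <= k) by nra. nra. }
  lra.
Qed.

Lemma isochronous_center_nonlinear (d : nat) (gamma k : R) : 0 < k ->
  (1 - gamma = / k \/ 1 - gamma = / (2 * k)) -> INR d = 3 / k - 2 * (1 - gamma) ->
  is_isochronous_center (EP1 d) (EP2 gamma).
Proof.
  intros Hk Hc Hd.
  set (lam := k - (1 - gamma) * k ^ 2).
  assert (Hk2 : 0 < k ^ 2) by (apply pow2_gt_0; lra).
  set (M := 4 * (1 + Rabs lam / k ^ 2)).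
  assert (HM : 0 < M).
  { unfold M. pose proof (Rabs_pos lam). pose proof (Rinv_0_lt_compat _ Hk2). unfold Rdiv. nra. }
  set (delta := Rmin 1 (k / M)).
  assert (Hdelta : 0 < delta) by (apply Rmin_glb_lt; [lra | apply Rdiv_lt_0_compat; lra]).
  assert (Hdk : M * delta <= k).
  { assert (Hdelta_k : delta <= k / M) by apply Rmin_r.
    apply (Rmult_le_compat_l M) in Hdelta_k; [| lra].
    replace (M * (k / M)) with k in Hdelta_k by (field; lra). exact Hdelta_k. }
  split; [unfold EP1; ring |]. split; [unfold EP2; ring |].
  exists delta. split; [exact Hdelta |]. exists (2 * PI).
  intros p1 p2 Hp.
  assert (Hsmall := iso_small_data k lam delta p1 p2 Hk
    (conj Hdelta (Rmin_l _ _)) Hdk (proj2 Hp)).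
  destruct (iso_initial_data k lam p1 p2 (Rgt_not_eq _ _ Hk) Hsmall) as [B [C [HBC [H1 H2]]]].
  assert (Hpos : forall t, 0 < 1 + osc_c B C t).
  { intros t. pose proof (osc_c_sqr_le B C t). nra. }
  exists (fun t => iso_Y1 k lam (osc_c B C t) (osc_s B C t)),
         (fun t => iso_Y2 k (osc_c B C t) (osc_s B C t)).
  split; [| split; [| split]].
  - apply is_solution_iso; auto; [lra |]. intros t. pose proof (Hpos t). lra.
  - unfold osc_c, osc_s. rewrite cos_0, sin_0. rewrite <- H1. f_equal; ring.
  - unfold osc_c, osc_s. rewrite cos_0, sin_0. rewrite <- H2. f_equal; ring.
  - apply (has_min_period_osc B C (iso_Y1 k lam) (iso_Y2 k)).
    + destruct (Req_dec B 0) as [EB | EB]; [destruct (Req_dec C 0) as [EC | EC] |].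
      * exfalso. subst B C. unfold iso_Y1, iso_Y2 in H1, H2.
        assert (p1 = 0) by (rewrite <- H1; field; lra).
        assert (p2 = 0) by (rewrite <- H2; field; lra).
        subst p1 p2. lra.
      * pose proof (pow2_ge_0 B). pose proof (pow2_gt_0 C EC). lra.
      * pose proof (pow2_ge_0 C). pose proof (pow2_gt_0 B EB). lra.
    + intros s E1 E2. pose proof (Hpos s).
      assert (Hpos0 : 0 < 1 + B).
      { replace B with (osc_c B C 0) by (unfold osc_c; rewrite cos_0, sin_0; ring). apply Hpos. }
      apply (iso_map_injective k lam); auto; lra.
Qed.

Lemma isochronous_condition_factor (c d : R) :
  (2 * c + d) ^ 2 = 9 * d * c <-> d = c \/ d = 4 * c.
Proof.
  replace ((2 * c + d) ^ 2) with ((4 * c - d) * (c - d) + 9 * d * c) by ring.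
  split.
  - intros H. assert (Hf : (4 * c - d) * (c - d) = 0) by lra.
    apply Rmult_integral in Hf. destruct Hf; [right | left]; lra.
  - intros [-> | ->]; ring.
Qed.

Lemma isochronous_condition_sufficient (d : nat) (gamma : R) :
  (2 * (1 - gamma) + INR d) ^ 2 = 9 * INR d * (1 - gamma) ->
  is_isochronous_center (EP1 d) (EP2 gamma).
Proof.
  rewrite isochronous_condition_factor. intros Hd.
  destruct (pos_INR d) as [Hpos | Hzero].
  - assert (Hc : 0 < 1 - gamma) by lra.
    destruct Hd as [Hd | Hd].
    + apply (isochronous_center_nonlinear d gamma (/ (1 - gamma))).
      * apply Rinv_0_lt_compat, Hc.
      * left. field. lra.
      * rewrite Hd. field. lra.
    + apply (isochronous_center_nonlinear d gamma (/ (2 * (1 - gamma)))).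
      * apply Rinv_0_lt_compat. lra.
      * right. field. lra.
      * rewrite Hd. field. lra.
  - replace d with 0%nat by (apply INR_eq; rewrite <- Hzero; reflexivity).
    apply isochronous_center_linear. lra.
Qed.

Theorem mainTheorem4 (d : nat) (gamma : R) :
  (forall (a b : R) (Y1 Y2 : R -> R),
     (forall t : R, a < t < b ->
        is_derive Y1 t (EP1 d (Y1 t) (Y2 t)) /\ is_derive Y2 t (EP2 gamma (Y1 t) (Y2 t))) ->
     forall t : R, a < t < b ->
       ex_derive (Derive Y2) t /\
       Derive (Derive Y2) t + (2 * (1 - gamma) + INR d) * Y2 t * Derive Y2 t
         + Y2 t + INR d * (1 - gamma) * Y2 t ^ 3 = 0)
  /\ (is_isochronous_center (EP1 d) (EP2 gamma) <->
        (2 * (1 - gamma) + INR d) ^ 2 = 9 * INR d * (1 - gamma))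
  /\ ((2 * (1 - gamma) + INR d) ^ 2 = 9 * INR d * (1 - gamma) <->
        gamma = 1 - INR d \/ gamma = 1 - INR d / 4)
  /\ (is_isochronous_center (EP1 d) (EP2 0) <-> (d = 1%nat \/ d = 4%nat)).
Proof.
  assert (Hiso : forall g, is_isochronous_center (EP1 d) (EP2 g) <->
                           (2 * (1 - g) + INR d) ^ 2 = 9 * INR d * (1 - g)).
  { split; [apply isochronous_condition_necessary | apply isochronous_condition_sufficient]. }
  split; [exact (lienard_equation d gamma) |].
  split; [apply Hiso |].
  split.
  - rewrite isochronous_condition_factor. split; intros [H | H]; lra.
  - rewrite Hiso, isochronous_condition_factor. split.
    + intros [H | H]; [left | right]; apply INR_eq; simpl; lra.
    + intros [-> | ->]; simpl; lra.
Qed.
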